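(* Consider a batch contextual bandit with finite context space $\mathcal{S}$, finite action space $\mathcal{A}$, context distribution $d_0$, reward distributions $R(s,a)\in\Delta([0,R_{\max}])$, behavior policy $\pi_b$, $\mu:=d_0\times\pi_b$, and finite class $\mathcal{F}$ of functions $\mathcal{S}\times\mathcal{A}\to[0,R_{\max}]$. Suppose $C<+\infty$ satisfies $\pi_b(a\mid s)\ge1/C$ for all $s,a$, and suppose $f^\star\in\mathcal{F}$ is a valid reward function, i.e. $\mathbb{E}_{(s,a)\sim\nu}[f^\star(s,a)]=\mathbb{E}_{(s,a)\sim\nu,\,r\sim R(s,a)}[r]$ for every admissible $\nu$ and $\mathcal{L}_\mu(f')-\mathcal{L}_\mu(f^\star)=\|f'-f^\star\|_\mu^2$ for every $f'\in\mathcal{F}$. Let $Q^\star(s,a)=\mathbb{E}_{r\sim R(s,a)}[r]$, $\epsilon_{\mathrm{approx}}:=\inf_{f\in\mathcal{F}}\|f-Q^\star\|_\mu^2$, and let $\epsilon\ge0$ satisfy $\epsilon\le\epsilon_{\mathrm{approx}}/2$. Then $$v^\star-2\sqrt{C(\epsilon+\epsilon_{\mathrm{approx}})}\ \le\ v^{\pi_{f^\star}}-2\sqrt{C\epsilon}.$$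
   Context: $\mathcal{L}_\mu(f):=\mathbb{E}_{(s,a)\sim\mu,\,r\sim R(s,a)}[(f(s,a)-r)^2]$; $\|g\|_\nu^2:=\mathbb{E}_{(s,a)\sim\nu}[g(s,a)^2]$; $\pi_f$ is the greedy policy $s\mapsto\arg\max_af(s,a)$ (fixed tie-breaking); admissible distributions are $d_0\times\pi_f$ for $f\in\mathcal{F}$; $v^\pi:=\mathbb{E}_{s\sim d_0,\,r\sim R(s,\pi(s))}[r]$; $v^\star:=\mathbb{E}_{s\sim d_0}[\max_aQ^\star(s,a)]$. *)

From HB Require Import structures.
From mathcomp Require Import all_boot all_order all_algebra.
From mathcomp Require Import all_classical all_reals all_analysis.
Set Implicit Arguments. Unset Strict Implicit. Unset Printing Implicit Defensive.
Import Order.TTheory GRing.Theory Num.Theory.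
Local Open Scope ring_scope.
Local Open Scope classical_set_scope.

Section Bandit.
Variables (R : realType) (S A : finType).

Definition reward_model := S -> A -> probability (measurableTypeR R) R.

Definition Qstar (Rw : reward_model) (s : S) (a : A) : R :=
  Rintegral (Rw s a) setT (fun r : R => r).

Definition loss (Rw : reward_model) (d0 : S -> R) (pib : S -> A -> R)
    (f : S -> A -> R) : R :=
  \sum_(s : S) \sum_(a : A) d0 s * pib s a *
     Rintegral (Rw s a) setT (fun r : R => (f s a - r) ^+ 2).

Definition normsq (d0 : S -> R) (pib : S -> A -> R) (g : S -> A -> R) : R :=
  \sum_(s : S) \sum_(a : A) d0 s * pib s a * (g s a) ^+ 2.

Definition greedy (a0 : A) (f : S -> A -> R) (s : S) : A :=
  [arg max_(a > a0) f s a]%O.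

Definition expect_pol (d0 : S -> R) (pi : S -> A) (g : S -> A -> R) : R :=
  \sum_(s : S) d0 s * g s (pi s).

Definition value (Rw : reward_model) (d0 : S -> R) (pi : S -> A) : R :=
  \sum_(s : S) d0 s * Qstar Rw s (pi s).

Definition vstar (Rw : reward_model) (d0 : S -> R) (a0 : A) : R :=
  \sum_(s : S) d0 s * \big[Num.max/Qstar Rw s a0]_(a : A) Qstar Rw s a.

End Bandit.

From HB Require Import structures.
From mathcomp Require Import all_boot all_order all_algebra.
From mathcomp Require Import all_classical all_reals all_analysis.
From mathcomp Require Import measurable_realfun ring lra.
Set Implicit Arguments. Unset Strict Implicit. Unset Printing Implicit Defensive.
Import Order.TTheory GRing.Theory Num.Theory.
Local Open Scope ring_scope.
Local Open Scope classical_set_scope.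

(* Bounded rewards make the squared loss split as L(f) = ||f - Q*||^2 + (reward
   variance), so validity of f* makes it the ||. - Q*||^2-minimiser of F and
   eps_approx = ||f* - Q*||^2.  Greediness and validity of f* bound the regret
   v* - v^{pi_f*} by E_{s ~ d0}[Q*(s, a_s) - f*(s, a_s)], a_s being the greedy
   action of Q*; by Jensen and pi_b >= 1/C this is at most sqrt(C eps_approx).
   What remains is sqrt y + 2 sqrt x <= 2 sqrt (x + y) for 0 <= 2x <= y. *)

Lemma sum_weighted_le_sqrt (R : rcfType) (I : finType) (w m : I -> R) :
  (forall i, 0 <= w i) -> \sum_i w i = 1 ->
  \sum_i w i * m i <= Num.sqrt (\sum_i w i * m i ^+ 2).
Proof.
move=> w_ge0 w_sum1; set M := \sum_i w i * m i.
have var_ge0 : 0 <= \sum_i w i * (m i - M) ^+ 2.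
  by apply: sumr_ge0 => i _; rewrite mulr_ge0 // sqr_ge0.
have varE : \sum_i w i * (m i - M) ^+ 2 = \sum_i w i * m i ^+ 2 - M ^+ 2.
  have -> : M ^+ 2 = \sum_i (2 * M * (w i * m i) - M ^+ 2 * w i).
    by rewrite sumrB -!mulr_sumr w_sum1 -/M; ring.
  by rewrite -sumrB; apply: eq_bigr => i _; ring.
apply: le_trans (ler_norm M) _.
have M2_ge0 := sqr_ge0 M.
by rewrite -sqrtr_sqr ler_sqrt; lra.
Qed.

Lemma inf_range_min (R : realType) (I : Type) (g : I -> R) (i0 : I) :
  (forall i, g i0 <= g i) -> inf (range g) = g i0.
Proof.
move=> g_min; have lb : lbound (range g) (g i0) by move=> _ [i _ <-].
apply/le_anti/andP; split; first by apply: (ge_inf (ex_intro _ _ lb)); exists i0.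
by apply: lb_le_inf => //; exists (g i0), i0.
Qed.

Lemma sqrt_le_twice_sqrtD (R : rcfType) (x y : R) :
  0 <= x -> 2 * x <= y -> Num.sqrt y + 2 * Num.sqrt x <= 2 * Num.sqrt (x + y).
Proof.
move=> x_ge0 xy.
have y_ge0 : 0 <= y by lra.
have := sqr_sqrtr x_ge0; have := sqr_sqrtr y_ge0.
have := sqr_sqrtr (addr_ge0 x_ge0 y_ge0).
have := sqrtr_ge0 x; have := sqrtr_ge0 y; have := sqrtr_ge0 (x + y).
set a := Num.sqrt x; set b := Num.sqrt y; set c := Num.sqrt (x + y).
move=> c_ge0 b_ge0 a_ge0 c2 b2 a2.
(* 16 a^2 <= 8 b^2 <= 9 b^2 *)
have ab : 4 * a <= 3 * b by nra.
have : (b + 2 * a) ^+ 2 <= (2 * c) ^+ 2 by nra.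
nra.
Qed.

Lemma integrable_bounded_ae (R : realType) d (T : measurableType d)
    (mu : {finite_measure set T -> \bar R}) (D : set T) (f : T -> R) (K : R) :
  measurable D -> mu (~` D) = 0%E -> measurable_fun setT f ->
  (forall x, D x -> `|f x| <= K) -> mu.-integrable setT (EFin \o f).
Proof.
move=> mD muDC mf fK.
have mEf : measurable_fun setT (EFin \o f) by exact/measurable_EFinP.
apply/(negligible_integrable (measurableC mD) measurableT mEf muDC).
rewrite setTD setCK.
apply: (@le_integrable _ _ _ mu D mD _ (EFin \o cst K)).
- exact: measurable_funS mEf.
- move=> x Dx /=; rewrite lee_fin; apply: le_trans (fK _ Dx) _; exact: ler_norm.
- exact: finite_measure_integrable_cst.
Qed.

Section BoundedSupport.
Variables (R : realType) (P : probability (measurableTypeR R) R) (M : R).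
Hypothesis P_supp : P [set r : R | 0 <= r <= M] = 1%E.

Let measurable_supp : measurable [set r : R | 0 <= r <= M].
Proof.
rewrite (_ : [set r | _] = `[0, M]%classic); first exact: measurable_itv.
by apply/seteqP; split => x /=; rewrite in_itv.
Qed.

Let negligible_out_supp : P (~` [set r : R | 0 <= r <= M]) = 0%E.
Proof. by rewrite probability_setC // P_supp subee. Qed.

Lemma integrable_id_supp : P.-integrable setT (EFin \o (fun r : R => r)).
Proof.
apply: (@integrable_bounded_ae _ _ _ P _ _ M measurable_supp negligible_out_supp).
  exact: measurable_id.
by move=> r /andP[r0 rM]; rewrite ger0_norm.
Qed.

Lemma integrable_sqr_supp : P.-integrable setT (EFin \o (fun r : R => r ^+ 2)).
Proof.
apply: (@integrable_bounded_ae _ _ _ P _ _ (M ^+ 2) measurable_supp negligible_out_supp).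
  exact: measurable_funX.
by move=> r /andP[r0 rM]; rewrite normrX ger0_norm // lerXn2r // nnegrE (le_trans r0).
Qed.

Lemma Rintegral_sqr_dev c :
  Rintegral P setT (fun r : R => (c - r) ^+ 2) =
  (c - Rintegral P setT id) ^+ 2 +
  (Rintegral P setT (fun r : R => r ^+ 2) - Rintegral P setT id ^+ 2).
Proof.
have -> : (fun r : R => (c - r) ^+ 2) = (fun r => (r ^+ 2 + (- 2 * c) * r) + c ^+ 2).
  by apply/funext => r; rewrite /=; lra.
have int_lin : P.-integrable setT (EFin \o (fun r : R => (- 2 * c) * r)).
  exact: integrableZl integrable_id_supp.
have int_quad : P.-integrable setT (EFin \o (fun r : R => r ^+ 2 + (- 2 * c) * r)).
  exact: integrableD integrable_sqr_supp int_lin.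
rewrite RintegralD // ?finite_measure_integrable_cst //.
rewrite RintegralD // ?integrable_sqr_supp // RintegralZl // ?integrable_id_supp //.
rewrite Rintegral_cst // (_ : fine _ = 1); first lra.
exact: (congr1 fine (probability_setT P)).
Qed.
End BoundedSupport.

Section Bandit.
Variables (R : realType) (S A : finType) (a0 : A).
Variables (d0 : S -> R) (pib : S -> A -> R) (Rw : reward_model R S A).
Hypothesis d0_ge0 : forall s, 0 <= d0 s.
Hypothesis pib_ge0 : forall s a, 0 <= pib s a.

Local Notation Q := (Qstar Rw).

Lemma normsq_ge0 (g : S -> A -> R) : 0 <= normsq d0 pib g.
Proof.
apply: sumr_ge0 => s _; apply: sumr_ge0 => a _.
by rewrite mulr_ge0 ?sqr_ge0 // mulr_ge0.
Qed.

Lemma loss_subE (Rmax : R) (f g : S -> A -> R) :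
  (forall s a, Rw s a [set r : R | 0 <= r <= Rmax] = 1%E) ->
  loss Rw d0 pib f - loss Rw d0 pib g =
  normsq d0 pib (fun s a => f s a - Q s a) - normsq d0 pib (fun s a => g s a - Q s a).
Proof.
move=> Rw_supp; rewrite /loss /normsq -!sumrB; apply: eq_bigr => s _.
rewrite -!sumrB; apply: eq_bigr => a _.
by rewrite !(Rintegral_sqr_dev (Rw_supp s a)) /Qstar; ring.
Qed.

Lemma greedy_max (f : S -> A -> R) s a : f s a <= f s (greedy a0 f s).
Proof. by rewrite /greedy; case: arg_maxP => // i _; apply. Qed.

Lemma vstarE : vstar Rw d0 a0 = value Rw d0 (greedy a0 Q).
Proof.
apply: eq_bigr => s _; congr (_ * _); apply/le_anti/andP; split.
  by apply: bigmax_le => *; exact: greedy_max.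
exact: le_bigmax.
Qed.

Lemma value_gap_le (f : S -> A -> R) :
  expect_pol d0 (greedy a0 f) f = value Rw d0 (greedy a0 f) ->
  vstar Rw d0 a0 - value Rw d0 (greedy a0 f) <=
  expect_pol d0 (greedy a0 Q) (fun s a => Q s a - f s a).
Proof.
move=> f_valid; rewrite vstarE -f_valid /value /expect_pol -sumrB.
apply: ler_sum => s _; rewrite -mulrBr ler_wpM2l // lerB //.
exact: greedy_max.
Qed.

Lemma expect_pol_sqr_le_normsq (C : R) (pi : S -> A) (g : S -> A -> R) :
  0 < C -> (forall s a, C^-1 <= pib s a) ->
  expect_pol d0 pi (fun s a => g s a ^+ 2) <= C * normsq d0 pib g.
Proof.
move=> C_gt0 pib_ge; rewrite /normsq mulr_sumr; apply: ler_sum => s _.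
rewrite (bigD1 (pi s)) //= mulrDr.
have rest_ge0 : 0 <= C * \sum_(a | a != pi s) d0 s * pib s a * g s a ^+ 2.
  apply: mulr_ge0; first exact: ltW.
  by apply: sumr_ge0 => a _; rewrite mulr_ge0 ?sqr_ge0 // mulr_ge0.
have C_pib : 1 <= C * pib s (pi s).
  by rewrite -(mulfV (lt0r_neq0 C_gt0)) ler_wpM2l // ltW.
have := mulr_ge0 (d0_ge0 s) (sqr_ge0 (g s (pi s))); nra.
Qed.

End Bandit.

Theorem proposition1 (R : realType) (S A : finType) (a0 : A)
  (Rmax : R) (d0 : S -> R) (pib : S -> A -> R) (Rw : reward_model R S A)
  (I : finType) (F : I -> (S -> A -> R)) (istar : I) (C eps : R) :
  (forall s, 0 <= d0 s) -> \sum_(s : S) d0 s = 1 ->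
  (forall s a, 0 <= pib s a) -> (forall s, \sum_(a : A) pib s a = 1) ->
  (forall s a, Rw s a [set r : R | 0 <= r <= Rmax] = 1%E) ->
  (forall i s a, 0 <= F i s a <= Rmax) ->
  0 < C -> (forall s a, C^-1 <= pib s a) ->
  (* f* := F istar is a valid reward function *)
  (forall i, expect_pol d0 (greedy a0 (F i)) (F istar) =
             value Rw d0 (greedy a0 (F i))) ->
  (forall i, loss Rw d0 pib (F i) - loss Rw d0 pib (F istar) =
             normsq d0 pib (fun s a => F i s a - F istar s a)) ->
  let eps_approx :=
    inf (range (fun i => normsq d0 pib (fun s a => F i s a - Qstar Rw s a))) in
  0 <= eps -> eps <= eps_approx / 2 ->
  vstar Rw d0 a0 - 2 * Num.sqrt (C * (eps + eps_approx))
    <= value Rw d0 (greedy a0 (F istar)) - 2 * Num.sqrt (C * eps).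
Proof.
move=> d0_ge0 d0_sum1 pib_ge0 _ Rw_supp _ C_gt0 pib_ge f_valid f_loss ea eps_ge0 eps_le.
set fs := F istar; set Q := Qstar Rw.
have fs_min i : normsq d0 pib (fun s a => fs s a - Q s a) <=
                normsq d0 pib (fun s a => F i s a - Q s a).
  by rewrite -subr_ge0 -(loss_subE d0 pib _ _ Rw_supp) f_loss normsq_ge0.
rewrite /ea (inf_range_min fs_min) in eps_le *.
set es := normsq d0 pib _ in fs_min eps_le *.
have gap : vstar Rw d0 a0 - value Rw d0 (greedy a0 fs) <= Num.sqrt (C * es).
  apply: le_trans (value_gap_le d0_ge0 (f_valid istar)) _.
  rewrite /expect_pol; apply: le_trans (sum_weighted_le_sqrt _ d0_ge0 d0_sum1) _.
  rewrite ler_sqrt; last by rewrite mulr_ge0 ?normsq_ge0 ?ltW.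
  apply: le_trans _ (expect_pol_sqr_le_normsq d0_ge0 pib_ge0 (greedy a0 Q) _ C_gt0 pib_ge).
  by under eq_bigr do rewrite -sqrrN opprB.
have eps_es : 2 * (C * eps) <= C * es by nra.
have := sqrt_le_twice_sqrtD (mulr_ge0 (ltW C_gt0) eps_ge0) eps_es.
rewrite -mulrDr; lra.
Qed.
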